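(* Let $S$ be a regular semigroup with set of idempotents $E$, and let $e\in E$. Suppose the connected component of $e$ in $\mathcal G(E)$ (the set of idempotents joined to $e$ by an $E$-path) is finite, containing $k$ idempotents, which lie in $m$ distinct $\mathcal R$-classes and $n$ distinct $\mathcal L$-classes. Then $\mathcal G(E)(e,e)$ is a free group of rank $k-(m+n)+1$.
   Context: For idempotents $e,f$: $e\,\mathcal R\,f$ iff $ef=f,\ fe=e$; $e\,\mathcal L\,f$ iff $ef=e,\ fe=f$. An $E$-path is a sequence $(e_1,\dots,e_n)$ of idempotents with $e_i\,(\mathcal R\cup\mathcal L)\,e_{i+1}$ for all $i$. A vertex $e_i$ ($1<i<n$) is inessential if $e_{i-1}\,\mathcal R\,e_i\,\mathcal R\,e_{i+1}$ or $e_{i-1}\,\mathcal L\,e_i\,\mathcal L\,e_{i+1}$; an $E$-chain is an equivalence class of $E$-paths under the equivalence generated by inserting or deleting inessential vertices. $\mathcal G(E)$ is the groupoid with object set $E$ whose morphisms from $e$ to $f$ are $E$-chains from $e$ to $f$, composed by concatenation and inverted by reversal; $\mathcal G(E)(e,e)$ denotes the group of morphisms from $e$ to $e$. *)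

From Stdlib Require Import List Arith Relations.
Import ListNotations.

Record Semigroup := {
  scar :> Type;
  smul : scar -> scar -> scar;
  smul_assoc : forall a b c, smul a (smul b c) = smul (smul a b) c
}.

Definition regular (S : Semigroup) : Prop :=
  forall a : S, exists x : S, smul S (smul S a x) a = a.

Section Idempotents.
Variable S : Semigroup.

Definition idem (e : S) : Prop := smul S e e = e.

Definition Rrel (e f : S) : Prop := smul S e f = f /\ smul S f e = e.
Definition Lrel (e f : S) : Prop := smul S e f = e /\ smul S f e = f.

Fixpoint adjacent_ok (p : list S) : Prop :=
  match p with
  | x :: ((y :: _) as t) => (Rrel x y \/ Lrel x y) /\ adjacent_ok t
  | _ => True
  end.

Definition is_Epath (p : list S) : Prop :=
  p <> [] /\ Forall idem p /\ adjacent_ok p.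

Definition Epath_from_to (p : list S) (e f : S) : Prop :=
  is_Epath p /\ hd_error p = Some e /\ hd_error (rev p) = Some f.

Definition del_step (p q : list S) : Prop :=
  is_Epath p /\
  exists (a b : list S) (x y z : S),
    p = a ++ x :: y :: z :: b /\ q = a ++ x :: z :: b /\
    ((Rrel x y /\ Rrel y z) \/ (Lrel x y /\ Lrel y z)).

(* Equivalence of E-paths generated by inserting/deleting inessential vertices;
   two E-paths are equivalent iff they represent the same E-chain. *)
Definition chain_equiv (p q : list S) : Prop :=
  clos_refl_sym_trans (list S) del_step p q.

Definition connected (e f : S) : Prop := exists p, Epath_from_to p e f.

(* Loops at e: E-paths from e to e; their classes form G(E)(e,e). *)
Definition loop (e : S) (p : list S) : Prop := Epath_from_to p e e.

Definition path_concat (p q : list S) : list S := p ++ tl q.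

End Idempotents.

Definition finite_card {T : Type} (P : T -> Prop) (k : nat) : Prop :=
  exists C : list T, NoDup C /\ (forall x, P x <-> In x C) /\ length C = k.

Definition num_classes {T : Type} (rel : T -> T -> Prop) (P : T -> Prop) (m : nat)
  : Prop :=
  exists reps : list T,
    (forall x, In x reps -> P x) /\
    ForallOrdPairs (fun a b => ~ rel a b) reps /\
    (forall x, P x -> exists r, In r reps /\ rel x r) /\
    length reps = m.

Record Group := {
  gcar :> Type;
  gop : gcar -> gcar -> gcar;
  gone : gcar;
  ginv : gcar -> gcar;
  gop_assoc : forall x y z, gop x (gop y z) = gop (gop x y) z;
  gone_l : forall x, gop gone x = x;
  ginv_l : forall x, gop (ginv x) x = gone
}.

(* A group homomorphism G(E)(e,e) -> H, presented as a map on loops at e that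
   is constant on E-chains and sends concatenation to the product. *)
Definition loop_hom (S : Semigroup) (e : S) (H : Group) (phi : list S -> H) : Prop :=
  (forall p q, loop S e p -> loop S e q -> chain_equiv S p q -> phi p = phi q) /\
  (forall p q, loop S e p -> loop S e q ->
     phi (path_concat S p q) = gop H (phi p) (phi q)).

(* G(E)(e,e) is free of rank r: there are r loops b_0..b_{r-1} at e whose
   classes form a free basis (universal property w.r.t. all groups). *)
Definition vertex_group_free_of_rank (S : Semigroup) (e : S) (r : nat) : Prop :=
  exists b : nat -> list S,
    (forall i, i < r -> loop S e (b i)) /\
    forall (H : Group) (h : nat -> H),
      (exists phi, loop_hom S e H phi /\ forall i, i < r -> phi (b i) = h i) /\
      (forall phi psi, loop_hom S e H phi -> loop_hom S e H psi ->
         (forall i, i < r -> phi (b i) = psi (b i)) ->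
         forall p, loop S e p -> phi p = psi p).

(* Enumerate the component breadth-first as e = x_0, x_1, ..., x_(k-1), so
   that each x_i (i > 0) is adjacent to an earlier idempotent.  The first
   idempotent of each R-class (resp. L-class) is its R-root (resp. L-root);
   no x_i <> e is both, so each such x_i has a parent, namely its R-root or,
   if it is an R-root, its L-root.  These parent edges form a spanning tree;
   the idempotents that are neither R- nor L-roots are the k + 1 - (m + n)
   generators.  To an edge (x, y) we attach the loop at e going up the tree
   to x, across (x, y), and down the tree from y.
   - Existence: a path product with weight 1 on R-edges and a potential
     difference on L-edges respects inessential vertices and sends the loop
     of the generator x to the prescribed element.
   - Uniqueness: a homomorphism is trivial on tree edges, so it is determined
     by its values on generator loops, first on all edge loops (which
     factor through the roots of their class) and then on all loops. *)
From Stdlib Require Import List Arith Relations Lia ClassicalEpsilon.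
Import ListNotations.

Fixpoint chain {T : Type} (Q : T -> T -> Prop) (l : list T) : Prop :=
  match l with
  | x :: ((y :: _) as t) => Q x y /\ chain Q t
  | _ => True
  end.

Section Chains.
Context {T : Type}.

Lemma chain_app (Q : T -> T -> Prop) l1 x l2 :
  chain Q (l1 ++ x :: l2) <-> chain Q (l1 ++ [x]) /\ chain Q (x :: l2).
Proof. induction l1 as [|a [|b l1] IH]; simpl; tauto. Qed.

Lemma chain_mono (Q Q' : T -> T -> Prop) l :
  (forall a b, Q a b -> Q' a b) -> chain Q l -> chain Q' l.
Proof. intros H. induction l as [|x [|y l] IH]; simpl; intuition. Qed.

Lemma chain_rev (Q : T -> T -> Prop) l : chain Q l -> chain (fun a b => Q b a) (rev l).
Proof.
  induction l as [|x [|y l] IH]; simpl; auto.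
  intros [Hxy Hl]. specialize (IH Hl). simpl in IH.
  replace ((rev l ++ [y]) ++ [x]) with (rev l ++ y :: [x]) by (rewrite <- app_assoc; reflexivity).
  apply chain_app. simpl. auto.
Qed.
End Chains.

Section Green.
Variable S : Semigroup.

Lemma Rrel_sym x y : Rrel S x y -> Rrel S y x.
Proof. unfold Rrel; tauto. Qed.

Lemma Lrel_sym x y : Lrel S x y -> Lrel S y x.
Proof. unfold Lrel; tauto. Qed.

Lemma Rrel_trans x y z : Rrel S x y -> Rrel S y z -> Rrel S x z.
Proof.
  unfold Rrel; intros [H1 H2] [H3 H4]. split.
  - rewrite <- H3, smul_assoc, H1; auto.
  - rewrite <- H2, smul_assoc, H4; auto.
Qed.

Lemma Lrel_trans x y z : Lrel S x y -> Lrel S y z -> Lrel S x z.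
Proof.
  unfold Lrel; intros [H1 H2] [H3 H4]. split.
  - rewrite <- H1 at 2. rewrite <- H3, smul_assoc, H1; auto.
  - rewrite <- H4, <- smul_assoc, H2, H4; auto.
Qed.

Lemma Rrel_refl x : idem S x -> Rrel S x x.
Proof. unfold Rrel, idem; auto. Qed.

Lemma Lrel_refl x : idem S x -> Lrel S x x.
Proof. unfold Lrel, idem; auto. Qed.

Lemma RL_eq x y : Rrel S x y -> Lrel S x y -> x = y.
Proof. unfold Rrel, Lrel; intros [H1 _] [H2 _]. congruence. Qed.

Definition adj (x y : S) : Prop := Rrel S x y \/ Lrel S x y.

Definition inessential (x y z : S) : Prop :=
  (Rrel S x y /\ Rrel S y z) \/ (Lrel S x y /\ Lrel S y z).

Lemma adj_sym x y : adj x y -> adj y x.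
Proof. intros [H|H]; [left; apply Rrel_sym|right; apply Lrel_sym]; auto. Qed.

Lemma inessential_adj x y z : inessential x y z -> adj x y /\ adj y z /\ adj x z.
Proof.
  intros [[H1 H2]|[H1 H2]]; unfold adj.
  - repeat split; left; eauto using Rrel_trans.
  - repeat split; right; eauto using Lrel_trans.
Qed.

Lemma inessential_back x y : adj x y -> inessential x y x.
Proof. intros [H|H]; [left|right]; split; auto using Rrel_sym, Lrel_sym. Qed.

Lemma inessential_repeat x y : idem S x -> adj x y -> inessential x x y.
Proof. intros Hx [H|H]; [left|right]; split; auto using Rrel_refl, Lrel_refl. Qed.

Lemma Epath_iff l : is_Epath S l <-> l <> [] /\ Forall (idem S) l /\ chain adj l.
Proof.
  assert (E : adjacent_ok S l <-> chain adj l)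
    by (induction l as [|x [|y l] IH]; simpl; try tauto; rewrite IH; reflexivity).
  unfold is_Epath. rewrite E. tauto.
Qed.

Lemma Epath_in_idem l x : is_Epath S l -> In x l -> idem S x.
Proof. rewrite Epath_iff, Forall_forall. intros (_ & H & _). auto. Qed.

Lemma Epath_rev l : is_Epath S l -> is_Epath S (rev l).
Proof.
  rewrite !Epath_iff, !Forall_forall. intros (H1 & H2 & H3). split; [|split].
  - intro E. apply H1. rewrite <- (rev_involutive l), E. reflexivity.
  - intros x Hx. apply H2, in_rev; auto.
  - eapply chain_mono; [|exact (chain_rev _ _ H3)]. intros; apply adj_sym; auto.
Qed.

Lemma Epath_join a x y b :
  is_Epath S (a ++ [x]) -> is_Epath S (y :: b) -> adj x y -> is_Epath S (a ++ x :: y :: b).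
Proof.
  rewrite !Epath_iff. intros (_ & H2 & H3) (_ & H5 & H6) H. split; [|split].
  - destruct a; discriminate.
  - replace (a ++ x :: y :: b) with ((a ++ [x]) ++ y :: b) by (rewrite <- app_assoc; reflexivity).
    apply Forall_app; auto.
  - apply chain_app. simpl. auto.
Qed.

Lemma Epath_split l1 x l2 :
  is_Epath S (l1 ++ x :: l2) -> is_Epath S (l1 ++ [x]) /\ is_Epath S (x :: l2).
Proof.
  rewrite !Epath_iff. intros (_ & H2 & H3). apply chain_app in H3.
  replace (l1 ++ x :: l2) with ((l1 ++ [x]) ++ l2) in H2 by (rewrite <- app_assoc; reflexivity).
  apply Forall_app in H2 as [H2a H2b]. apply Forall_app in H2a as H2c.
  destruct H2c as [_ Hx]. inversion Hx.
  split; (split; [destruct l1; discriminate|]); split; try constructor; tauto.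
Qed.

Lemma Epath_adj l1 x y l2 : is_Epath S (l1 ++ x :: y :: l2) -> adj x y.
Proof. intros H. apply Epath_split, proj2, Epath_iff in H. simpl in H. tauto. Qed.

Lemma del_step_Epath p q : del_step S p q -> is_Epath S q.
Proof.
  intros [Hp (a & b & x & y & z & -> & -> & H)].
  apply Epath_split in Hp as [Hp1 Hp2].
  apply (Epath_split [x; y]) in Hp2 as [_ Hp3].
  apply Epath_join; auto. apply (inessential_adj x y z H).
Qed.

Lemma chain_equiv_Epath p q : chain_equiv S p q -> is_Epath S p -> is_Epath S q.
Proof.
  intros H. assert (p = q \/ (is_Epath S p /\ is_Epath S q)) as [->|[_ E]]; auto.
  induction H as [p q Hd| | |p q r _ [->|IH1] _ [->|IH2]]; intuition.
  right. split; [apply Hd|eapply del_step_Epath; eauto].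
Qed.

Lemma chain_equiv_del A B x y z : is_Epath S (A ++ x :: y :: z :: B) ->
  inessential x y z -> chain_equiv S (A ++ x :: y :: z :: B) (A ++ x :: z :: B).
Proof. intros H1 H2. apply rst_step. split; auto. exists A, B, x, y, z; auto. Qed.

Lemma chain_equiv_spur A a c B : is_Epath S (A ++ a :: c :: a :: B) -> B <> [] ->
  chain_equiv S (A ++ a :: c :: a :: B) (A ++ a :: B).
Proof.
  intros H HB. destruct B as [|b B]; [congruence|].
  assert (Ha : idem S a) by (eapply Epath_in_idem; eauto; apply in_or_app; simpl; auto).
  assert (Hac := inessential_back _ _ (Epath_adj _ _ _ _ H)).
  assert (H2 := chain_equiv_Epath _ _ (chain_equiv_del _ _ _ _ _ H Hac) H).
  eapply rst_trans; [apply chain_equiv_del; auto|].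
  assert (Hab : adj a b)
    by (apply (Epath_adj (A ++ [a]) a b B); rewrite <- app_assoc; exact H2).
  apply chain_equiv_del; auto. apply inessential_repeat; auto.
Qed.

Lemma chain_equiv_backtrack w : forall a c A B,
  is_Epath S (A ++ a :: w ++ c :: rev w ++ a :: B) -> B <> [] ->
  chain_equiv S (A ++ a :: w ++ c :: rev w ++ a :: B) (A ++ a :: B).
Proof.
  induction w as [|d w IH]; intros a c A B H HB; simpl in *.
  - apply chain_equiv_spur; auto.
  - replace (A ++ a :: d :: w ++ c :: (rev w ++ [d]) ++ a :: B) with
      ((A ++ [a]) ++ d :: w ++ c :: rev w ++ d :: a :: B) in * by
      (repeat (rewrite <- ?app_assoc, <- ?app_comm_cons; simpl); reflexivity).
    assert (H2 := chain_equiv_Epath _ _ (IH _ _ _ _ H ltac:(discriminate)) H).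
    eapply rst_trans; [apply IH; auto; discriminate|].
    replace ((A ++ [a]) ++ d :: a :: B) with (A ++ a :: d :: a :: B) in *
      by (rewrite <- app_assoc; reflexivity).
    apply chain_equiv_spur; auto.
Qed.

Lemma Epath_from_to_concat p q a b c :
  Epath_from_to S p a b -> Epath_from_to S q b c -> Epath_from_to S (path_concat S p q) a c.
Proof.
  intros (Hp & Hpa & Hpb) (Hq & Hqb & Hqc). unfold path_concat.
  destruct p as [|x p'] using rev_ind; [destruct Hp; congruence|]. clear IHp'.
  rewrite rev_app_distr in Hpb. simpl in Hpb. inversion Hpb; subst x.
  destruct q as [|y q]; [destruct Hq; congruence|]. simpl in Hqb. inversion Hqb; subst y.
  destruct q as [|y q]; simpl.
  { rewrite app_nil_r. split; [|split]; auto. rewrite rev_app_distr. exact Hqc. }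
  rewrite <- app_assoc. simpl. split; [|split].
  - apply Epath_join; auto. apply (Epath_split [b] y q Hq). apply (Epath_adj [] _ _ _ Hq).
  - destruct p'; simpl in *; auto.
  - rewrite <- Hqc, !rev_app_distr. simpl. rewrite <- !app_assoc. destruct (rev q); reflexivity.
Qed.

Lemma Epath_from_to_snoc q z y a b : Epath_from_to S ((q ++ [z]) ++ [y]) a b ->
  Epath_from_to S (q ++ [z]) a z /\ adj z y /\ b = y.
Proof.
  intros (Hp & Ha & Hb). rewrite rev_app_distr in Hb. simpl in Hb. inversion Hb; subst b.
  rewrite <- app_assoc in Hp. simpl in Hp. split; [|split; eauto using Epath_adj].
  apply Epath_split in Hp. split; [tauto|split].
  - destruct q; simpl in *; rewrite <- ?app_assoc in Ha; auto.
  - rewrite rev_app_distr; reflexivity.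
Qed.

End Green.

Section GroupFacts.
Variable H : Group.

(* The only idempotent of a group is its identity; hence the usual group laws. *)
Lemma gop_idem_one (a : H) : gop H a a = a -> a = gone H.
Proof.
  intros E. assert (E2 : gop H (ginv H a) (gop H a a) = gop H (ginv H a) a) by (rewrite E; auto).
  rewrite gop_assoc, ginv_l, gone_l in E2. rewrite E2; auto.
Qed.

Lemma ginv_r (a : H) : gop H a (ginv H a) = gone H.
Proof.
  apply gop_idem_one. rewrite <- gop_assoc. f_equal. rewrite gop_assoc, ginv_l, gone_l. auto.
Qed.

Lemma gone_r (a : H) : gop H a (gone H) = a.
Proof. rewrite <- (ginv_l H a), gop_assoc, ginv_r, gone_l. auto. Qed.

Lemma ginv_unique (a b c : H) : gop H a b = gone H -> gop H a c = gone H -> b = c.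
Proof.
  intros E1 E2.
  rewrite <- (gone_l H b), <- (gone_l H c), <- (ginv_l H a), <- !gop_assoc, E1, E2. auto.
Qed.

Lemma ginv_ginv (a : H) : ginv H (ginv H a) = a.
Proof. apply (ginv_unique (ginv H a)); [apply ginv_r|apply ginv_l]. Qed.

Lemma ginv_one : ginv H (gone H) = gone H.
Proof. rewrite <- (gone_r (ginv H (gone H))). apply ginv_l. Qed.

Fixpoint path_prod {T : Type} (w : T -> T -> H) (l : list T) : H :=
  match l with
  | x :: ((y :: _) as t) => gop H (w x y) (path_prod w t)
  | _ => gone H
  end.

Lemma path_prod_app {T : Type} (w : T -> T -> H) l1 x l2 :
  path_prod w (l1 ++ x :: l2) = gop H (path_prod w (l1 ++ [x])) (path_prod w (x :: l2)).
Proof.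
  induction l1 as [|a [|b l1] IH].
  - simpl. rewrite gone_l. auto.
  - simpl. rewrite gone_r. auto.
  - change (gop H (w a b) (path_prod w ((b :: l1) ++ x :: l2)) =
            gop H (gop H (w a b) (path_prod w ((b :: l1) ++ [x]))) (path_prod w (x :: l2))).
    rewrite IH, gop_assoc. auto.
Qed.

Lemma path_prod_one {T : Type} (w : T -> T -> H) l :
  chain (fun a b => w a b = gone H) l -> path_prod w l = gone H.
Proof.
  induction l as [|x [|y l] IH]; auto. intros [H1 H2].
  simpl in *. rewrite H1, IH, gone_l; auto.
Qed.

Lemma path_prod_loop_hom (S : Semigroup) (e : S) (w : S -> S -> H) :
  (forall x y z, inessential S x y z -> gop H (w x y) (w y z) = w x z) ->
  loop_hom S e H (path_prod w).
Proof.
  intros Hw. split.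
  - intros p q _ _ Hpq.
    induction Hpq as [p q [_ (a & b & x & y & z & -> & -> & Hr)]|p|p q _ IH|p q r _ IH1 _ IH2].
    + rewrite (path_prod_app w a x (y :: z :: b)), (path_prod_app w a x (z :: b)).
      f_equal. simpl. rewrite gop_assoc, Hw; auto.
    + reflexivity.
    + symmetry. exact IH.
    + rewrite IH1. exact IH2.
  - intros p q (Hp & _ & Hpl) (Hq & Hqh & _).
    destruct p as [|y p] using rev_ind; [destruct Hp; congruence|]. clear IHp.
    rewrite rev_app_distr in Hpl. simpl in Hpl. inversion Hpl; subst y.
    destruct q as [|y q]; [destruct Hq; congruence|]. simpl in Hqh. inversion Hqh; subst y.
    unfold path_concat. simpl. rewrite <- app_assoc. apply path_prod_app.
Qed.

End GroupFacts.

Definition dec (P : Prop) : {P} + {~ P} := excluded_middle_informative P.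

Section FiniteLists.
Context {T : Type}.

Fixpoint first_such (P : T -> Prop) (l : list T) (d : T) : T :=
  match l with [] => d | y :: l' => if dec (P y) then y else first_such P l' d end.

Lemma first_such_spec (P : T -> Prop) l d : (exists z, In z l /\ P z) ->
  In (first_such P l d) l /\ P (first_such P l d).
Proof.
  induction l as [|y l IH]; simpl; intros (z & Hz & Pz); [contradiction|].
  destruct (dec (P y)); [auto|]. destruct Hz; [subst; contradiction|].
  destruct IH as [H1 H2]; eauto.
Qed.

Lemma first_such_ext (P Q : T -> Prop) l d d' : (forall z, P z <-> Q z) ->
  (exists z, In z l /\ P z) -> first_such P l d = first_such Q l d'.
Proof.
  intros HPQ. induction l as [|y l IH]; simpl; intros (z & Hz & Pz); [contradiction|].
  destruct (dec (P y)) as [Py|Py], (dec (Q y)) as [Qy|Qy]; auto.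
  - exfalso. apply Qy, HPQ, Py.
  - exfalso. apply Py, HPQ, Qy.
  - destruct Hz as [->|Hz]; [contradiction|eauto].
Qed.

Lemma first_such_prefix (P : T -> Prop) l1 l2 d :
  (exists z, In z l1 /\ P z) -> In (first_such P (l1 ++ l2) d) l1.
Proof.
  induction l1 as [|y l IH]; simpl; intros (z & Hz & Pz); [contradiction|].
  destruct (dec (P y)); [auto|]. destruct Hz; [subst; contradiction|]. right; eauto.
Qed.

Fixpoint index_of (y : T) (l : list T) : nat :=
  match l with [] => 0 | a :: l' => if dec (a = y) then 0 else S (index_of y l') end.

Lemma index_of_nth (l : list T) i d : NoDup l -> i < length l -> index_of (nth i l d) l = i.
Proof.
  revert i. induction l as [|a l IH]; intros i Hnd Hi; simpl in *; [lia|].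
  inversion Hnd; subst. destruct i as [|i]; simpl.
  - destruct (dec (a = a)); congruence.
  - destruct (dec (a = nth i l d)) as [E|E].
    + exfalso. apply H1. rewrite E. apply nth_In. lia.
    + f_equal. apply IH; auto. lia.
Qed.

Lemma nth_index_of (l : list T) y d : In y l -> nth (index_of y l) l d = y.
Proof.
  induction l as [|a l IH]; simpl; intros H; [contradiction|].
  destruct (dec (a = y)); auto. destruct H; [congruence|auto].
Qed.

Lemma index_of_lt (l : list T) y : In y l -> index_of y l < length l.
Proof.
  induction l as [|a l IH]; simpl; intros H; [contradiction|].
  destruct (dec (a = y)); [lia|]. destruct H; [congruence|]. specialize (IH H); lia.
Qed.

Definition equiv_on (P : T -> Prop) (rel : T -> T -> Prop) : Prop :=
  (forall x, P x -> rel x x) /\ (forall x y, rel x y -> rel y x) /\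
  (forall x y z, rel x y -> rel y z -> rel x z).

Definition rep_system (rel : T -> T -> Prop) (P : T -> Prop) (reps : list T) : Prop :=
  (forall x, In x reps -> P x) /\ ForallOrdPairs (fun a b => ~ rel a b) reps /\
  (forall x, P x -> exists r, In r reps /\ rel x r).

Lemma inequiv_le_cover (rel : T -> T -> Prop) (P : T -> Prop) (A B : list T) :
  equiv_on P rel -> (forall x, In x A -> P x) ->
  ForallOrdPairs (fun a b => ~ rel a b) A ->
  (forall x, P x -> exists r, In r B /\ rel x r) ->
  length A <= length B.
Proof.
  intros (_ & Hsym & Htr) HA HF Hcov.
  set (f := fun a => first_such (rel a) B a).
  assert (Hf : forall a, In a A -> In (f a) B /\ rel a (f a)).
  { intros a Ha. apply first_such_spec. destruct (Hcov a (HA a Ha)) as (r & ? & ?); eauto. }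
  rewrite <- (length_map f A). apply NoDup_incl_length.
  - clear Hcov. induction A as [|a A IH]; simpl; constructor; inversion HF; subst.
    + intros Hin. apply in_map_iff in Hin as (b & Eb & Hb).
      rewrite Forall_forall in *. apply (H1 b Hb).
      destruct (Hf a) as [_ Ha]; [left; auto|]. destruct (Hf b) as [_ Hb']; [right; auto|].
      rewrite <- Eb in Ha. eauto.
    + apply IH; auto; intros; [apply HA|apply Hf]; right; auto.
  - intros y Hy. apply in_map_iff in Hy as (a & <- & Ha). apply Hf; auto.
Qed.

Lemma rep_system_length (rel : T -> T -> Prop) (P : T -> Prop) (A B : list T) :
  equiv_on P rel -> rep_system rel P A -> rep_system rel P B -> length A = length B.
Proof.
  intros Heq (HA & HFA & HcA) (HB & HFB & HcB).
  apply Nat.le_antisymm; eapply inequiv_le_cover; eauto.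
Qed.

Lemma NoDup_ForallOrdPairs (Q : T -> T -> Prop) l : NoDup l ->
  (forall a b, In a l -> In b l -> a <> b -> Q a b) -> ForallOrdPairs Q l.
Proof.
  induction l as [|a l IH]; intros Hnd H; constructor; inversion Hnd; subst.
  - rewrite Forall_forall. intros x Hx. apply H; simpl; auto. congruence.
  - apply IH; auto. intros; apply H; simpl; auto.
Qed.

End FiniteLists.
Definition holds (P : Prop) : bool := if dec P then true else false.

Lemma holds_spec (P : Prop) : holds P = true <-> P.
Proof. unfold holds. destruct (dec P); intuition congruence. Qed.

Lemma filter_partition3 {T : Type} (f g h : T -> bool) l :
  (forall x, In x l ->
     (if f x then 1 else 0) + (if g x then 1 else 0) + (if h x then 1 else 0) = 1) ->
  length (filter f l) + length (filter g l) + length (filter h l) = length l.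
Proof.
  induction l as [|a l IH]; intros H; simpl; auto.
  assert (Ha := H a (or_introl eq_refl)).
  assert (IH' := IH (fun x Hx => H x (or_intror Hx))).
  destruct (f a), (g a), (h a); simpl in *; lia.
Qed.

Definition accessible_order (S : Semigroup) (l : list S) : Prop :=
  forall l1 x l2, l = l1 ++ x :: l2 -> l1 <> [] -> exists z, In z l1 /\ adj S z x.

Section Component.
Variable S : Semigroup.
Variable e : S.
Variable rest : list S.
Let ord := e :: rest.
Hypothesis He : idem S e.
Hypothesis ord_nodup : NoDup ord.
Hypothesis ord_component : forall x, In x ord <-> connected S e x.
Hypothesis ord_accessible : accessible_order S ord.

Lemma ord_idem x : In x ord -> idem S x.
Proof.
  intros H. apply ord_component in H as (p & Hp & _ & Hl).
  eapply Epath_in_idem; eauto. apply in_rev. destruct (rev p); simpl in *; [discriminate|].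
  inversion Hl; auto.
Qed.

Lemma ord_split l1 x l2 : ord = l1 ++ x :: l2 -> In x ord.
Proof. intros ->. apply in_or_app. simpl. auto. Qed.

Lemma ord_unique l1 x l2 : ord = l1 ++ x :: l2 -> ~ In x (l1 ++ l2).
Proof. intros E. apply NoDup_remove_2. rewrite <- E. exact ord_nodup. Qed.

Lemma ord_ind (P : S -> Prop) :
  (forall l1 x l2, ord = l1 ++ x :: l2 -> (forall y, In y l1 -> P y) -> P x) ->
  forall x, In x ord -> P x.
Proof.
  intros H.
  assert (Hpre : forall l1 l2, ord = l1 ++ l2 -> forall y, In y l1 -> P y).
  { induction l1 as [|x l1 IH] using rev_ind; intros l2 E y Hy; [contradiction|].
    rewrite <- app_assoc in E. simpl in E.
    apply in_app_or in Hy as [Hy|[<-|[]]]; eauto. }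
  intros x Hx. apply (Hpre ord []); auto. rewrite app_nil_r; auto.
Qed.

Definition root (rel : S -> S -> Prop) (x : S) : S := first_such (rel x) ord x.

Section Root.
Variable rel : S -> S -> Prop.
Hypothesis rel_equiv : equiv_on (fun x => In x ord) rel.

Lemma root_spec x : In x ord -> In (root rel x) ord /\ rel x (root rel x).
Proof.
  destruct rel_equiv as (Hr & _ & _). intros Hx. apply first_such_spec. exists x. auto.
Qed.

Lemma root_eq x y : In x ord -> rel x y -> root rel x = root rel y.
Proof.
  destruct rel_equiv as (Hr & Hs & Ht). intros Hx Hxy.
  apply first_such_ext; [intros z; split; eauto|exists x; auto].
Qed.

Lemma root_idem x : In x ord -> root rel (root rel x) = root rel x.
Proof.
  intros Hx. destruct (root_spec x Hx) as [_ H]. symmetry. apply root_eq; auto.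
Qed.

Lemma root_e : root rel e = e.
Proof.
  destruct rel_equiv as (Hr & _ & _). unfold root, ord. simpl.
  destruct (dec (rel e e)) as [_|n]; auto. exfalso; apply n, Hr; simpl; auto.
Qed.

Lemma root_before l1 x l2 : ord = l1 ++ x :: l2 -> root rel x = x \/ In (root rel x) l1.
Proof.
  intros E. unfold root. rewrite E.
  assert (Hx : rel x x) by (apply (proj1 rel_equiv), (ord_split _ _ _ E)).
  clear E. induction l1 as [|y l IH]; simpl; [destruct (dec (rel x x)); tauto|].
  destruct (dec (rel x y)); tauto.
Qed.

Lemma root_prefix l1 x l2 z : ord = l1 ++ x :: l2 -> In z l1 -> rel z x -> In (root rel x) l1.
Proof.
  destruct rel_equiv as (_ & Hs & _). intros E Hz H. unfold root. rewrite E.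
  apply first_such_prefix. eauto.
Qed.

(* The roots form a system of representatives of the classes, so there are
   as many roots as classes. *)
Lemma root_count m : num_classes rel (connected S e) m ->
  length (filter (fun x => holds (root rel x = x)) ord) = m.
Proof.
  intros (A & HA & HF & Hcov & <-). symmetry.
  apply (rep_system_length rel (fun x => In x ord)); auto.
  - split; [|split]; auto.
    + intros x Hx. apply ord_component; auto.
    + intros x Hx. apply Hcov, ord_component; auto.
  - split; [|split].
    + intros x Hx. apply filter_In in Hx. tauto.
    + apply NoDup_ForallOrdPairs; [apply NoDup_filter; auto|].
      intros a b Ha Hb Hab Rab.
      apply filter_In in Ha as [Ha Ea]. apply filter_In in Hb as [Hb Eb].
      rewrite holds_spec in Ea, Eb. apply Hab. rewrite <- Ea, <- Eb. apply root_eq; auto.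
    + intros x Hx. destruct (root_spec x Hx) as [Hr Hxr]. exists (root rel x).
      split; auto. apply filter_In. split; auto. apply holds_spec, root_idem; auto.
Qed.

End Root.

Lemma Rrel_equiv : equiv_on (fun x => In x ord) (Rrel S).
Proof. split; [|split]; eauto using Rrel_refl, ord_idem, Rrel_sym, Rrel_trans. Qed.

Lemma Lrel_equiv : equiv_on (fun x => In x ord) (Lrel S).
Proof. split; [|split]; eauto using Lrel_refl, ord_idem, Lrel_sym, Lrel_trans. Qed.

Local Notation rootR := (root (Rrel S)).
Local Notation rootL := (root (Lrel S)).

(* Apart from [e], no idempotent is the root of both its R-class and its
   L-class: it is adjacent to an earlier one. *)
Lemma not_both_root x : In x ord -> x <> e -> ~ (rootR x = x /\ rootL x = x).
Proof.
  intros Hx Hne [ER EL]. destruct (in_split x ord Hx) as (l1 & l2 & E).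
  assert (Hl1 : l1 <> []) by (intros ->; simpl in E; unfold ord in E; congruence).
  apply (ord_unique _ _ _ E), in_or_app. left.
  destruct (ord_accessible l1 x l2 E Hl1) as (z & Hz & [Hr|Hl]).
  - rewrite <- ER. eapply root_prefix; eauto. apply Rrel_equiv.
  - rewrite <- EL. eapply root_prefix; eauto. apply Lrel_equiv.
Qed.

Definition parent (x : S) : S := if dec (rootR x = x) then rootL x else rootR x.

Lemma parent_spec l1 x l2 : ord = l1 ++ x :: l2 -> x <> e ->
  In (parent x) l1 /\ adj S (parent x) x.
Proof.
  intros E Hne. assert (Hx := ord_split _ _ _ E). unfold parent.
  destruct (dec (rootR x = x)) as [H|H].
  - assert (H2 : rootL x <> x) by (intro; apply (not_both_root x); auto).
    destruct (root_spec _ Lrel_equiv x Hx) as [_ Hxr].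
    split; [|right; apply Lrel_sym; auto].
    destruct (root_before _ Lrel_equiv _ _ _ E); tauto.
  - destruct (root_spec _ Rrel_equiv x Hx) as [_ Hxr].
    split; [|left; apply Rrel_sym; auto].
    destruct (root_before _ Rrel_equiv _ _ _ E); tauto.
Qed.

Lemma parent_in_ord x : In x ord -> x <> e -> In (parent x) ord /\ adj S (parent x) x.
Proof.
  intros Hx Hne. destruct (in_split x ord Hx) as (l1 & l2 & E).
  destruct (parent_spec _ _ _ E Hne) as [Hp A]. split; auto.
  rewrite E. apply in_or_app; auto.
Qed.

(* [tree_walk l x]: scanning the reversed prefix [l] of [ord] ending in [x],
   the path of ancestors of [x] from [e] (with [x] excluded). *)
Fixpoint tree_walk (l : list S) (x : S) : list S :=
  match l with
  | [] => []
  | y :: l' =>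
      if dec (x = y) then (if dec (x = e) then [] else tree_walk l' (parent x) ++ [parent x])
      else tree_walk l' x
  end.

Definition tree_path (x : S) : list S := tree_walk (rev ord) x.

Lemma tree_walk_skip l2 l1 y : ~ In y l2 -> tree_walk (l2 ++ l1) y = tree_walk l1 y.
Proof.
  induction l2 as [|a l2 IH]; simpl; intros H; auto.
  destruct (dec (y = a)); [subst; tauto|]. auto.
Qed.

Lemma tree_path_split l1 x l2 : ord = l1 ++ x :: l2 -> tree_path x = tree_walk (x :: rev l1) x.
Proof.
  intros E. unfold tree_path. rewrite E, rev_app_distr. simpl. rewrite <- app_assoc.
  apply tree_walk_skip. intros Hin. apply (ord_unique _ _ _ E), in_or_app. right. apply in_rev; auto.
Qed.

Lemma tree_path_e : tree_path e = [].
Proof.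
  rewrite (tree_path_split [] e rest); auto. simpl. destruct (dec (e = e)); congruence.
Qed.

Lemma tree_path_parent x : In x ord -> x <> e ->
  tree_path x = tree_path (parent x) ++ [parent x].
Proof.
  intros Hx Hne. destruct (in_split x ord Hx) as (l1 & l2 & E).
  rewrite (tree_path_split _ _ _ E). simpl. destruct (dec (x = x)); [|congruence].
  destruct (dec (x = e)); [congruence|]. f_equal.
  destruct (parent_spec _ _ _ E Hne) as (Hp & _).
  destruct (in_split _ _ Hp) as (la & lb & E1).
  assert (E2 : ord = la ++ parent x :: (lb ++ x :: l2))
    by (rewrite E, E1, <- app_assoc; reflexivity).
  rewrite (tree_path_split _ _ _ E2), E1, rev_app_distr. simpl. rewrite <- app_assoc.
  apply tree_walk_skip. intros Hin. apply (ord_unique _ _ _ E2), in_or_app. right.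
  apply in_or_app. left. apply in_rev; auto.
Qed.

Definition tree_edge (a b : S) : Prop :=
  (a = e /\ b = e) \/ (In b ord /\ b <> e /\ a = parent b).

Lemma tree_path_chain x : In x ord ->
  chain tree_edge (e :: tree_path x ++ [x]) /\ (forall y, In y (tree_path x) -> In y ord).
Proof.
  revert x. apply ord_ind. intros l1 y l2 E IH.
  assert (Hy := ord_split _ _ _ E).
  destruct (dec (y = e)) as [->|Hne].
  - rewrite tree_path_e. simpl. split; [|tauto]. split; auto. left; auto.
  - destruct (parent_spec _ _ _ E Hne) as (Hp & _).
    destruct (parent_in_ord y Hy Hne) as (Hpo & _).
    destruct (IH _ Hp) as [H1 H2]. rewrite (tree_path_parent y Hy Hne). split.
    + replace (e :: (tree_path (parent y) ++ [parent y]) ++ [y]) with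
        ((e :: tree_path (parent y)) ++ parent y :: [y])
        by (simpl; rewrite <- app_assoc; reflexivity).
      apply chain_app. split; [exact H1|]. simpl. split; auto. right; auto.
    + intros z Hz. apply in_app_or in Hz as [Hz|[<-|[]]]; auto.
Qed.

Lemma tree_edge_adj a b : tree_edge a b -> adj S a b.
Proof.
  intros [[-> ->]|(Hb & Hne & ->)].
  - left; apply Rrel_refl; auto.
  - apply parent_in_ord; auto.
Qed.

Lemma tree_path_Epath x : In x ord -> is_Epath S (e :: tree_path x ++ [x]).
Proof.
  intros Hx. destruct (tree_path_chain x Hx) as [H1 H2].
  apply Epath_iff. split; [discriminate|split].
  - constructor; auto. apply Forall_app. split.
    + rewrite Forall_forall; intros; apply ord_idem; auto.
    + constructor; auto. apply ord_idem; auto.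
  - eapply chain_mono; [|exact H1]. apply tree_edge_adj.
Qed.

Definition edge_loop (x y : S) : list S := e :: tree_path x ++ x :: y :: rev (tree_path y) ++ [e].

Lemma edge_loop_Epath x y : In x ord -> In y ord -> adj S x y -> is_Epath S (edge_loop x y).
Proof.
  intros Hx Hy H. unfold edge_loop.
  change (e :: tree_path x ++ x :: y :: rev (tree_path y) ++ [e])
    with ((e :: tree_path x) ++ x :: y :: rev (tree_path y) ++ [e]).
  apply Epath_join; [exact (tree_path_Epath x Hx)| |exact H].
  assert (Hp := Epath_rev S _ (tree_path_Epath y Hy)).
  simpl in Hp. rewrite rev_app_distr, <- app_assoc in Hp. exact Hp.
Qed.

Lemma edge_loop_loop x y : In x ord -> In y ord -> adj S x y -> loop S e (edge_loop x y).
Proof.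
  intros. split; [apply edge_loop_Epath; auto|split; auto].
  unfold edge_loop. replace (e :: tree_path x ++ x :: y :: rev (tree_path y) ++ [e]) with
    ((e :: tree_path x ++ x :: y :: rev (tree_path y)) ++ [e])
    by (simpl; rewrite <- app_assoc; reflexivity).
  rewrite rev_app_distr. reflexivity.
Qed.

Local Ltac list_eq :=
  repeat (simpl; rewrite <- ?app_assoc); simpl; rewrite ?rev_involutive; reflexivity.

Lemma trivial_loop : loop S e [e; e].
Proof.
  split; [|split; auto]. apply Epath_iff. simpl.
  repeat split; auto; [discriminate|left; apply Rrel_refl; auto].
Qed.

Section Homomorphism.
Variable H : Group.
Variable phi : list S -> H.
Hypothesis Hphi : loop_hom S e H phi.

Lemma hom_trivial_loop : phi [e; e] = gone H.
Proof.
  assert (L2 := Epath_from_to_concat S _ _ e e e trivial_loop trivial_loop).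
  apply gop_idem_one. rewrite <- (proj2 Hphi); try apply trivial_loop.
  apply (proj1 Hphi); auto using trivial_loop.
  apply (chain_equiv_del S [] []); [exact (proj1 L2)|].
  left; split; apply Rrel_refl; auto.
Qed.

(* Edge loops compose along inessential triples: the two tree paths in the
   middle cancel, leaving an inessential vertex. *)
Lemma hom_edge_loop_compose x z y : In x ord -> In z ord -> In y ord ->
  inessential S x z y -> gop H (phi (edge_loop x z)) (phi (edge_loop z y)) = phi (edge_loop x y).
Proof.
  intros Hx Hz Hy Hr. destruct (inessential_adj S _ _ _ Hr) as (Axz & Azy & Axy).
  rewrite <- (proj2 Hphi); try apply edge_loop_loop; auto.
  assert (Hc := Epath_from_to_concat S _ _ e e e
                  (edge_loop_loop x z Hx Hz Axz) (edge_loop_loop z y Hz Hy Azy)).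
  apply (proj1 Hphi); auto using edge_loop_loop.
  set (A := e :: tree_path x ++ [x]). set (B := y :: rev (tree_path y) ++ [e]).
  assert (EL : path_concat S (edge_loop x z) (edge_loop z y) =
    A ++ z :: rev (tree_path z) ++ e :: rev (rev (tree_path z)) ++ z :: B).
  { unfold path_concat, edge_loop, A, B. list_eq. }
  rewrite EL in *. destruct Hc as [Hc _].
  assert (Hb := chain_equiv_backtrack S _ _ _ _ _ Hc ltac:(discriminate)).
  eapply rst_trans; [exact Hb|].
  assert (E2 : A ++ z :: B = (e :: tree_path x) ++ x :: z :: y :: (rev (tree_path y) ++ [e]))
    by (unfold A, B; list_eq).
  replace (edge_loop x y) with ((e :: tree_path x) ++ x :: y :: (rev (tree_path y) ++ [e]))
    by (unfold edge_loop; list_eq).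
  rewrite E2 in *. apply chain_equiv_del; auto.
  exact (chain_equiv_Epath S _ _ Hb Hc).
Qed.

Lemma hom_edge_loop_refl x : In x ord -> phi (edge_loop x x) = gone H.
Proof.
  intros Hx. apply gop_idem_one. apply hom_edge_loop_compose; auto.
  left; split; apply Rrel_refl, ord_idem; auto.
Qed.

Lemma hom_edge_loop_inv x y : In x ord -> In y ord -> adj S x y ->
  gop H (phi (edge_loop x y)) (phi (edge_loop y x)) = gone H.
Proof.
  intros Hx Hy A. rewrite hom_edge_loop_compose; auto using hom_edge_loop_refl.
  apply inessential_back; auto.
Qed.

Lemma hom_edge_loop_tree x : In x ord -> x <> e ->
  phi (edge_loop (parent x) x) = gone H /\ phi (edge_loop x (parent x)) = gone H.
Proof.
  intros Hx Hne. destruct (parent_in_ord x Hx Hne) as (Hp & A).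
  assert (H1 : phi (edge_loop (parent x) x) = gone H).
  { rewrite <- (hom_edge_loop_refl (parent x)); auto.
    apply (proj1 Hphi); try apply edge_loop_loop; auto.
    - left; apply Rrel_refl, ord_idem; auto.
    - assert (Hl := edge_loop_Epath (parent x) x Hp Hx A).
      unfold edge_loop in *. rewrite (tree_path_parent x Hx Hne), rev_app_distr in *.
      set (P := tree_path (parent x)) in *.
      replace (e :: P ++ parent x :: x :: (rev [parent x] ++ rev P) ++ [e]) with
        ((e :: P) ++ parent x :: x :: parent x :: (rev P ++ [e])) in * by list_eq.
      replace (e :: P ++ parent x :: parent x :: rev P ++ [e]) with
        ((e :: P) ++ parent x :: parent x :: (rev P ++ [e])) by list_eq.
      apply chain_equiv_del; auto. apply inessential_back; auto. }
  split; auto. assert (Hi := hom_edge_loop_inv (parent x) x Hp Hx A).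
  rewrite H1, gone_l in Hi. auto.
Qed.

End Homomorphism.

Definition close_loop (q : list S) (y : S) : list S := q ++ rev (tree_path y) ++ [e].

Lemma close_loop_loop q y : Epath_from_to S q e y -> loop S e (close_loop q y).
Proof.
  intros Hq. assert (Hy : In y ord) by (apply ord_component; exists q; auto).
  change (close_loop q y) with (path_concat S q (y :: rev (tree_path y) ++ [e])).
  apply (Epath_from_to_concat S _ _ e y e); auto.
  assert (Hp := Epath_rev S _ (tree_path_Epath y Hy)).
  split; [|split; auto].
  - simpl in Hp. rewrite rev_app_distr, <- app_assoc in Hp. exact Hp.
  - change (y :: rev (tree_path y) ++ [e]) with ((y :: rev (tree_path y)) ++ [e]).
    rewrite rev_app_distr. reflexivity.
Qed.

Definition gens : list S := filter (fun x => holds (rootR x <> x /\ rootL x <> x)) ord.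

Lemma gens_spec x : In x gens <-> In x ord /\ rootR x <> x /\ rootL x <> x.
Proof. unfold gens. rewrite filter_In, holds_spec. reflexivity. Qed.

Lemma parent_R x : rootR x <> x -> parent x = rootR x.
Proof. unfold parent. destruct (dec (rootR x = x)); tauto. Qed.

Lemma parent_L x : rootR x = x -> parent x = rootL x.
Proof. unfold parent. destruct (dec (rootR x = x)); tauto. Qed.

Section Uniqueness.
Variable H : Group.
Variables phi psi : list S -> H.
Hypothesis Hphi : loop_hom S e H phi.
Hypothesis Hpsi : loop_hom S e H psi.
Hypothesis agree_gens :
  forall x, In x gens -> phi (edge_loop x (rootL x)) = psi (edge_loop x (rootL x)).

Lemma agree_parent x : In x ord -> x <> e ->
  phi (edge_loop x (parent x)) = psi (edge_loop x (parent x)).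
Proof.
  intros Hx Hne.
  rewrite (proj2 (hom_edge_loop_tree H phi Hphi x Hx Hne)),
          (proj2 (hom_edge_loop_tree H psi Hpsi x Hx Hne)).
  reflexivity.
Qed.

Lemma agree_rootR x : In x ord -> phi (edge_loop x (rootR x)) = psi (edge_loop x (rootR x)).
Proof.
  intros Hx. destruct (dec (rootR x = x)) as [E|E].
  - rewrite E, !hom_edge_loop_refl; auto.
  - assert (Hne : x <> e) by (intros ->; apply E, root_e, Rrel_equiv).
    rewrite <- (parent_R x E). apply agree_parent; auto.
Qed.

Lemma agree_rootL x : In x ord -> phi (edge_loop x (rootL x)) = psi (edge_loop x (rootL x)).
Proof.
  intros Hx. destruct (dec (rootL x = x)) as [E|E].
  - rewrite E, !hom_edge_loop_refl; auto.
  - destruct (dec (rootR x = x)) as [ER|ER].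
    + assert (Hne : x <> e) by (intros ->; apply E, root_e, Lrel_equiv).
      rewrite <- (parent_L x ER). apply agree_parent; auto.
    + apply agree_gens, gens_spec; auto.
Qed.

(* Agreement on the edges to the root of a class propagates to all edges
   inside the class, since [edge_loop x y] factors through the root. *)
Lemma agree_class rel : equiv_on (fun x => In x ord) rel ->
  (forall x y z, rel x y -> rel y z -> inessential S x y z) ->
  (forall x, In x ord -> phi (edge_loop x (root rel x)) = psi (edge_loop x (root rel x))) ->
  forall x y, In x ord -> In y ord -> rel x y -> phi (edge_loop x y) = psi (edge_loop x y).
Proof.
  intros Heq Hin Hroot x y Hx Hy Hxy.
  destruct (root_spec rel Heq x Hx) as [Hr Hxr].
  assert (Eyr : root rel y = root rel x) by (symmetry; apply root_eq; auto).
  set (r := root rel x) in *.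
  destruct Heq as (_ & Hs & Ht).
  assert (Hry : rel r y) by eauto.
  assert (Ayr : adj S y r) by (apply (inessential_adj S y r y (Hin _ _ _ (Hs _ _ Hry) Hry))).
  assert (Ey : phi (edge_loop y r) = psi (edge_loop y r)) by (rewrite <- Eyr; auto).
  rewrite <- (hom_edge_loop_compose H phi Hphi x r y),
          <- (hom_edge_loop_compose H psi Hpsi x r y); auto.
  f_equal; [apply Hroot; auto|].
  apply (ginv_unique H (phi (edge_loop y r))); [|rewrite Ey];
    apply hom_edge_loop_inv; auto using adj_sym.
Qed.

Lemma agree_adj x y : In x ord -> In y ord -> adj S x y -> phi (edge_loop x y) = psi (edge_loop x y).
Proof.
  intros Hx Hy [A|A].
  - apply (agree_class (Rrel S)); auto using Rrel_equiv, agree_rootR.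
    intros; left; auto.
  - apply (agree_class (Lrel S)); auto using Lrel_equiv, agree_rootL.
    intros; right; auto.
Qed.

(* By induction on the path: closing [q ++ [z; y]] is closing [q ++ [z]]
   followed by [edge_loop z y], up to cancelling a backtrack. *)
Lemma agree_close q : forall y, Epath_from_to S (q ++ [y]) e y ->
  phi (close_loop (q ++ [y]) y) = psi (close_loop (q ++ [y]) y).
Proof.
  induction q as [|z q IH] using rev_ind; intros y Hq.
  - destruct Hq as (_ & Ha & _). simpl in Ha. inversion Ha; subst y.
    unfold close_loop. rewrite tree_path_e. simpl. rewrite !hom_trivial_loop; auto.
  - destruct (Epath_from_to_snoc S q z y e y Hq) as (Hq' & A & _).
    assert (Hz : In z ord) by (apply ord_component; exists (q ++ [z]); auto).
    assert (Hy : In y ord) by (apply ord_component; exists ((q ++ [z]) ++ [y]); auto).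
    assert (L1 := Epath_from_to_concat S _ _ e e e
                    (close_loop_loop _ _ Hq') (edge_loop_loop z y Hz Hy A)).
    assert (EC : chain_equiv S (path_concat S (close_loop (q ++ [z]) z) (edge_loop z y))
                               (close_loop ((q ++ [z]) ++ [y]) y)).
    { assert (E1 : path_concat S (close_loop (q ++ [z]) z) (edge_loop z y) =
        q ++ z :: rev (tree_path z) ++ e :: rev (rev (tree_path z)) ++ z ::
          (y :: rev (tree_path y) ++ [e]))
        by (unfold path_concat, close_loop, edge_loop; list_eq).
      replace (close_loop ((q ++ [z]) ++ [y]) y) with (q ++ z :: (y :: rev (tree_path y) ++ [e]))
        by (unfold close_loop; list_eq).
      rewrite E1 in *. apply chain_equiv_backtrack; [apply L1|discriminate]. }
    rewrite <- (proj1 Hphi _ _ L1 (close_loop_loop _ _ Hq) EC),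
            <- (proj1 Hpsi _ _ L1 (close_loop_loop _ _ Hq) EC).
    rewrite (proj2 Hphi), (proj2 Hpsi); auto using close_loop_loop, edge_loop_loop.
    rewrite IH, agree_adj; auto.
Qed.

Lemma agree_loops p : loop S e p -> phi p = psi p.
Proof.
  intros Hp. destruct p as [|y q] using rev_ind; [destruct Hp as [[]]; congruence|]. clear IHq.
  assert (Ey : y = e)
    by (destruct Hp as (_ & _ & Hl); rewrite rev_app_distr in Hl; simpl in Hl; congruence).
  subst y.
  assert (E : path_concat S (q ++ [e]) [e; e] = close_loop (q ++ [e]) e)
    by (unfold close_loop; rewrite tree_path_e; reflexivity).
  assert (C1 := proj2 Hphi _ _ Hp trivial_loop). assert (C2 := proj2 Hpsi _ _ Hp trivial_loop).
  rewrite E, (hom_trivial_loop H phi Hphi), gone_r in C1.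
  rewrite E, (hom_trivial_loop H psi Hpsi), gone_r in C2.
  rewrite <- C1, <- C2. apply agree_close. exact Hp.
Qed.

End Uniqueness.

Section Existence.
Variable H : Group.
Variable h : nat -> H.

Definition potential (x : S) : H :=
  if dec (In x gens) then ginv H (h (index_of x gens)) else gone H.

Definition weight (x y : S) : H :=
  if dec (Rrel S x y) then gone H else gop H (ginv H (potential x)) (potential y).

Lemma weight_L x y : Lrel S x y -> weight x y = gop H (ginv H (potential x)) (potential y).
Proof.
  intros A. unfold weight. destruct (dec (Rrel S x y)) as [R|]; auto.
  rewrite <- (RL_eq S x y R A), ginv_l. auto.
Qed.

Lemma weight_inessential x y z :
  inessential S x y z -> gop H (weight x y) (weight y z) = weight x z.
Proof.
  intros [[A B]|[A B]].
  - unfold weight. destruct (dec (Rrel S x y)); [|tauto]. destruct (dec (Rrel S y z)); [|tauto].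
    destruct (dec (Rrel S x z)) as [|n]; [apply gone_l|].
    exfalso; apply n; eapply Rrel_trans; eauto.
  - rewrite !weight_L; eauto using Lrel_trans.
    rewrite <- gop_assoc, (gop_assoc H (potential y)), ginv_r, gone_l. auto.
Qed.

Lemma potential_root x : rootR x = x \/ rootL x = x -> potential x = gone H.
Proof.
  intros Hr. unfold potential. destruct (dec (In x gens)) as [I|]; auto.
  apply gens_spec in I. tauto.
Qed.

Lemma weight_tree a b : tree_edge a b -> weight a b = gone H /\ weight b a = gone H.
Proof.
  intros [[-> ->]|(Hb & Hne & ->)].
  - unfold weight. destruct (dec (Rrel S e e)) as [|n]; [auto|].
    exfalso; apply n, Rrel_refl; auto.
  - destruct (dec (rootR b = b)) as [E|E].
    + rewrite (parent_L b E). destruct (root_spec _ Lrel_equiv b Hb) as [Hr A].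
      rewrite !weight_L; auto using Lrel_sym.
      rewrite (potential_root b), (potential_root (rootL b)), ginv_one, gone_l; auto.
      right. apply root_idem; auto using Lrel_equiv.
    + rewrite (parent_R b E). destruct (root_spec _ Rrel_equiv b Hb) as [Hr A].
      unfold weight. destruct (dec (Rrel S (rootR b) b)) as [|n].
      * destruct (dec (Rrel S b (rootR b))); tauto.
      * exfalso; apply n, Rrel_sym; auto.
Qed.

Lemma weight_edge_loop x y : In x ord -> In y ord -> path_prod H weight (edge_loop x y) = weight x y.
Proof.
  intros Hx Hy. unfold edge_loop.
  change (e :: tree_path x ++ x :: y :: rev (tree_path y) ++ [e])
    with ((e :: tree_path x) ++ x :: y :: rev (tree_path y) ++ [e]).
  rewrite path_prod_app, path_prod_one, gone_l.
  - change (gop H (weight x y) (path_prod H weight (y :: rev (tree_path y) ++ [e])) = weight x y).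
    rewrite path_prod_one; [apply gone_r|].
    assert (T := chain_rev _ _ (proj1 (tree_path_chain y Hy))).
    simpl in T. rewrite rev_app_distr in T. simpl in T.
    eapply chain_mono; [|exact T]. intros a b Tab. apply (weight_tree b a Tab).
  - eapply chain_mono; [|apply (tree_path_chain x Hx)]. intros a b T; apply (weight_tree a b T).
Qed.

Lemma weight_gen x : In x gens -> path_prod H weight (edge_loop x (rootL x)) = h (index_of x gens).
Proof.
  intros Hn. assert (Hn' := Hn). apply gens_spec in Hn' as (Hx & E1 & E2).
  destruct (root_spec _ Lrel_equiv x Hx) as [Hr A].
  rewrite weight_edge_loop, weight_L, (potential_root (rootL x)), gone_r; auto.
  - unfold potential. destruct (dec (In x gens)); [apply ginv_ginv|contradiction].
  - right. apply root_idem; auto using Lrel_equiv.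
Qed.

End Existence.

Definition gen_loop (i : nat) : list S := edge_loop (nth i gens e) (rootL (nth i gens e)).

Lemma vertex_group_free_gens : vertex_group_free_of_rank S e (length gens).
Proof.
  assert (Hnd : NoDup gens) by (apply NoDup_filter; auto).
  exists gen_loop. split.
  - intros i Hi. destruct (proj1 (gens_spec _) (nth_In gens e Hi)) as (Hx & _).
    destruct (root_spec _ Lrel_equiv _ Hx). apply edge_loop_loop; auto. right; auto.
  - intros H h. split.
    + exists (path_prod H (weight H h)). split; [apply path_prod_loop_hom, weight_inessential|].
      intros i Hi. unfold gen_loop. rewrite weight_gen, index_of_nth; auto. apply nth_In; auto.
    + intros phi psi Hphi Hpsi Hb. apply agree_loops; auto.
      intros x Hx. rewrite <- (nth_index_of gens x e Hx). apply Hb, index_of_lt; auto.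
Qed.

(* Every idempotent but [e] is exactly one of: an R-root only, an L-root only,
   a generator; [e] is both an R-root and an L-root. *)
Lemma count_roots_gens :
  length (filter (fun x => holds (rootR x = x)) ord) +
  length (filter (fun x => holds (rootL x = x)) ord) + length gens = length ord + 1.
Proof.
  assert (ER : rootR e = e) by (apply root_e, Rrel_equiv).
  assert (EL : rootL e = e) by (apply root_e, Lrel_equiv).
  assert (Ee : holds (e = e) = true) by (apply holds_spec; auto).
  assert (Ene : holds (e <> e /\ e <> e) = false)
    by (unfold holds; destruct (dec _) as [[H _]|]; [exfalso; auto|reflexivity]).
  assert (Hr : ~ In e rest) by (inversion ord_nodup; auto).
  unfold gens, ord. simpl. rewrite ER, EL, Ee, Ene. simpl.
  rewrite <- (filter_partition3 (fun x => holds (rootR x = x)) (fun x => holds (rootL x = x))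
               (fun x => holds (rootR x <> x /\ rootL x <> x)) rest); [lia|].
  intros x Hx. assert (Hne : x <> e) by (intros ->; contradiction).
  assert (NB := not_both_root x (or_intror Hx) Hne). unfold holds.
  destruct (dec (rootR x = x)), (dec (rootL x = x)), (dec (rootR x <> x /\ rootL x <> x));
    tauto || lia.
Qed.

Lemma vertex_group_free_component m n :
  num_classes (Rrel S) (connected S e) m -> num_classes (Lrel S) (connected S e) n ->
  vertex_group_free_of_rank S e (length ord + 1 - (m + n)).
Proof.
  intros Hm Hn.
  replace (length ord + 1 - (m + n)) with (length gens); [apply vertex_group_free_gens|].
  rewrite <- (root_count _ Rrel_equiv m Hm), <- (root_count _ Lrel_equiv n Hn),
          <- count_roots_gens.
  lia.
Qed.

End Component.

Lemma path_exit {T : Type} (L : list T) p : forall a, In a L -> (exists y, In y p /\ ~ In y L) ->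
  exists a' b l1 l2, a :: p = l1 ++ a' :: b :: l2 /\ In a' L /\ ~ In b L.
Proof.
  induction p as [|b p IH]; intros a Ha (y & Hy & Hn); [contradiction|].
  destruct (dec (In b L)) as [Hb|Hb].
  - destruct (IH b) as (a' & b' & l1 & l2 & E & H1 & H2); auto.
    { destruct Hy as [->|Hy]; [contradiction|eauto]. }
    exists a', b', (a :: l1), l2. rewrite E. auto.
  - exists a, b, [], p. auto.
Qed.

Lemma connected_refl (S : Semigroup) (e : S) : idem S e -> connected S e e.
Proof.
  intros He. exists [e]. split; [|split; auto].
  apply Epath_iff. repeat split; auto. discriminate.
Qed.

Lemma accessible_order_extend (S : Semigroup) (e : S) (l : list S) :
  accessible_order S (e :: l) -> (exists y, connected S e y /\ ~ In y (e :: l)) ->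
  exists b, connected S e b /\ ~ In b (e :: l) /\ accessible_order S ((e :: l) ++ [b]).
Proof.
  intros Hacc (y & (p & Hp & Hh & Ht) & Hn).
  destruct p as [|a p]; [destruct Hp; congruence|]. simpl in Hh. inversion Hh; subst a.
  destruct (path_exit (e :: l) p e) as (a' & b & l1 & l2 & E & Ha' & Hb); [left; auto| |].
  { assert (Hyp : In y (e :: p)).
    { apply in_rev. destruct (rev (e :: p)); simpl in Ht; [discriminate|].
      inversion Ht; left; auto. }
    destruct Hyp as [<-|Hyp]; [exfalso; apply Hn; left; auto|]. exists y; auto. }
  rewrite E in Hp. assert (Hab : adj S a' b) by (eapply Epath_adj; eauto).
  exists b. split; [|split; auto].
  - exists (l1 ++ [a'; b]).
    replace (l1 ++ a' :: b :: l2) with ((l1 ++ [a']) ++ b :: l2) in Hp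
      by (rewrite <- app_assoc; reflexivity).
    replace (l1 ++ [a'; b]) with ((l1 ++ [a']) ++ [b]) by (rewrite <- app_assoc; reflexivity).
    apply Epath_split in Hp as [Hp _]. split; [|split]; auto.
    + destruct l1; simpl in *; inversion E; auto.
    + rewrite rev_app_distr. reflexivity.
  - intros k1 x k2 Ek Hk1. destruct k2 as [|c k2'] using rev_ind.
    + apply app_inj_tail in Ek as [<- <-]. exists a'. auto.
    + clear IHk2'.
      replace (k1 ++ x :: k2' ++ [c]) with ((k1 ++ x :: k2') ++ [c]) in Ek
        by (rewrite <- app_assoc; reflexivity).
      apply app_inj_tail in Ek as [Ek _]. apply (Hacc k1 x k2'); auto.
Qed.

Definition partial_enumeration (S : Semigroup) (e : S) (l : list S) : Prop :=
  NoDup (e :: l) /\ (forall x, In x (e :: l) -> connected S e x) /\ accessible_order S (e :: l).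

Lemma partial_enumeration_exists (S : Semigroup) (e : S) (C : list S) :
  idem S e -> NoDup C -> (forall x, connected S e x <-> In x C) ->
  forall s, s < length C -> exists rest, length rest = s /\ partial_enumeration S e rest.
Proof.
  intros He HCnd HC. induction s as [|s IH]; intros Hs.
  - exists []. split; [|split; [|split]]; auto.
    + repeat constructor; auto.
    + intros x [<-|[]]. apply connected_refl; auto.
    + intros [|a [|b l1]] x l2 E Hl; simpl in E; try congruence; inversion E.
  - destruct IH as (rest & Hl & Hnd & Hc & Hacc); [lia|].
    destruct (accessible_order_extend S e rest Hacc) as (b & Hb & Hbn & Hacc').
    { destruct (dec (exists y, connected S e y /\ ~ In y (e :: rest))) as [Y|Y]; auto.
      assert (Hincl : incl C (e :: rest)).
      { intros y Hy. apply HC in Hy. destruct (dec (In y (e :: rest))); auto.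
        exfalso; apply Y; eauto. }
      apply NoDup_incl_length in Hincl; auto. simpl in Hincl. lia. }
    exists (rest ++ [b]). split; [rewrite length_app; simpl; lia|].
    unfold partial_enumeration. change (e :: rest ++ [b]) with ((e :: rest) ++ [b]).
    split; [|split; auto].
    + apply NoDup_app; auto.
      * repeat constructor; auto.
      * intros x Hx [<-|[]]; contradiction.
    + intros x Hx. apply in_app_or in Hx as [Hx|[<-|[]]]; auto.
Qed.

(* A finite component of [e] admits an accessible enumeration starting at [e]:
   a partial one of full length exhausts the component. *)
Lemma accessible_enumeration (S : Semigroup) (e : S) (k : nat) :
  idem S e -> finite_card (connected S e) k ->
  exists rest, NoDup (e :: rest) /\ (forall x, In x (e :: rest) <-> connected S e x) /\
    accessible_order S (e :: rest) /\ length (e :: rest) = k.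
Proof.
  intros He (C & HCnd & HC & <-).
  assert (Hk : 0 < length C).
  { destruct C; [destruct (proj1 (HC e) (connected_refl S e He))|simpl; lia]. }
  destruct (partial_enumeration_exists S e C He HCnd HC (length C - 1))
    as (rest & Hl & Hnd & Hc & Hacc); [lia|].
  exists rest. split; [|split; [|split]]; auto; [|simpl; lia].
  intros x. split; auto. intros Hx. apply HC in Hx. revert x Hx.
  apply NoDup_length_incl; auto; [simpl; lia|]. intros y Hy. apply HC. auto.
Qed.

Theorem mainTheorem6 (S : Semigroup) (HS : regular S) (e : S) (He : idem S e)
  (k m n : nat)
  (Hk : finite_card (connected S e) k)
  (Hm : num_classes (Rrel S) (connected S e) m)
  (Hn : num_classes (Lrel S) (connected S e) n) :
  vertex_group_free_of_rank S e (k + 1 - (m + n)).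
Proof.
  destruct (accessible_enumeration S e k He Hk) as (rest & Hnd & Hcomp & Hacc & <-).
  exact (vertex_group_free_component S e rest He Hnd Hcomp Hacc m n Hm Hn).
Qed.
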